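(* Let $k$ be an odd positive integer, let $D=k^2+1$ and $n=k^2$. Suppose $(a,b)$ and $(a',b')$ are two primitive solutions (i.e. $\gcd(a,b)=\gcd(a',b')=1$) of $X^2-DY^2=n$ such that $(a,b)$ is equivalent neither to $(a',b')$ nor to $(a',-b')$. Then there exist coprime integers $p,q$, both greater than $1$, with $k=pq$, such that both $p^4$ and $q^4$ are primitively represented by the form $X^2-DY^2$, i.e. there are coprime integers $u_1,v_1$ with $u_1^2-Dv_1^2=p^4$ and coprime integers $u_2,v_2$ with $u_2^2-Dv_2^2=q^4$.
   Context: Two solutions $(x,y)$ and $(x',y')$ of $X^2-DY^2=n$ are called equivalent if $xx'\equiv Dyy' \pmod{n}$ and $xy'\equiv yx'\pmod{n}$. *)

From Stdlib Require Import ZArith Znumtheory.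
Open Scope Z_scope.

Definition is_solution (D n x y : Z) : Prop := x * x - D * y * y = n.

Definition primitive_solution (D n x y : Z) : Prop :=
  is_solution D n x y /\ Z.gcd x y = 1.

Definition equiv_sol (D n x y x' y' : Z) : Prop :=
  (n | x * x' - D * y * y') /\ (n | x * y' - y * x').

From Stdlib Require Import ZArith Znumtheory Lia.
Open Scope Z_scope.

(* Let D = k^2 + 1 and let (a,b), (a',b') be primitive solutions
   of X^2 - D Y^2 = k^2.  Composing them in the two possible ways gives
     X = aa' - Dbb',  Y = a'b - ab'    and    X' = aa' + Dbb',
   both of norm k^4.  Since a, a' are prime to k (k^2+1 is) and k is odd,
   X + X' = 2aa' is prime to k, while X X' = k^2 (k^2 + D(b^2+b'^2)).  Hence
   k = p q with p = gcd(k,X), q = gcd(k,X') coprime, p^2 divides X and Y,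
   and (X/p^2, Y/p^2) is a primitive representation of q^4; symmetrically
   the second composition yields one of p^4.  If q = 1, then k^2 divides X
   and Y, which says (a,b) ~ (a',b'); likewise p = 1 gives (a,b) ~ (a',-b'). *)

Lemma coprime_intro (x y : Z) :
  (forall d, (d | x) -> (d | y) -> (d | 1)) -> Z.gcd x y = 1.
Proof.
  intros H; apply Z.divide_1_r_nonneg; [apply Z.gcd_nonneg|].
  apply H; [apply Z.gcd_divide_l | apply Z.gcd_divide_r].
Qed.

Lemma coprime_elim (x y d : Z) : Z.gcd x y = 1 -> (d | x) -> (d | y) -> (d | 1).
Proof. intros H Hx Hy; rewrite <- H; now apply Z.gcd_greatest. Qed.

Lemma coprime_mul_r (n m p : Z) :
  Z.gcd n m = 1 -> Z.gcd n p = 1 -> Z.gcd n (m * p) = 1.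
Proof. rewrite !Zgcd_1_rel_prime; apply rel_prime_mult. Qed.

Lemma coprime_mul_l (n m p : Z) :
  Z.gcd n p = 1 -> Z.gcd m p = 1 -> Z.gcd (n * m) p = 1.
Proof. rewrite !(Z.gcd_comm _ p); apply coprime_mul_r. Qed.

Lemma coprime_divisor_l (d n m : Z) : (d | n) -> Z.gcd n m = 1 -> Z.gcd d m = 1.
Proof.
  intros Hd H; apply coprime_intro; intros e He Hm.
  exact (coprime_elim _ _ _ H (Z.divide_trans _ _ _ He Hd) Hm).
Qed.

(* If k divides XY then k divides gcd(k,X) gcd(k,Y): multiplicativity of
   gcd turns the product into gcd(k g, X g) with g = gcd(k,Y). *)
Lemma divide_gcd_mul_gcd (k X Y : Z) :
  (k | X * Y) -> (k | Z.gcd k X * Z.gcd k Y).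
Proof.
  intros HXY.
  assert (Hg : 0 <= Z.gcd k Y) by apply Z.gcd_nonneg.
  assert (HXg : (k | X * Z.gcd k Y)).
  { apply Z.divide_abs_r; rewrite Z.abs_mul, (Z.abs_eq (Z.gcd k Y)) by exact Hg.
    rewrite <- Z.gcd_mul_mono_l.
    apply Z.gcd_greatest; [apply Z.divide_mul_r, Z.divide_refl | exact HXY]. }
  replace (Z.gcd k X * Z.gcd k Y) with (Z.gcd k X * Z.abs (Z.gcd k Y))
    by now rewrite Z.abs_eq.
  rewrite <- Z.gcd_mul_mono_r.
  apply Z.gcd_greatest; [apply Z.divide_mul_l, Z.divide_refl | exact HXg].
Qed.

Lemma coprime_divisors_mul (r s k : Z) :
  (r | k) -> (s | k) -> Z.gcd r s = 1 -> (r * s | k).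
Proof.
  intros [t ->] Hs Hrs.
  rewrite Z.mul_comm; apply Z.mul_divide_mono_r.
  apply Z.gauss with r; [now rewrite Z.mul_comm | now rewrite Z.gcd_comm].
Qed.

Lemma coprime_factorization (k X Y : Z) :
  0 <= k -> (k | X * Y) ->
  (forall d, (d | k) -> (d | X) -> (d | Y) -> (d | 1)) ->
  k = Z.gcd k X * Z.gcd k Y /\ Z.gcd (Z.gcd k X) (Z.gcd k Y) = 1.
Proof.
  intros Hk HXY Hcop.
  assert (Hsplit : Z.gcd (Z.gcd k X) (Z.gcd k Y) = 1).
  { apply coprime_intro; intros d HdX HdY.
    apply Hcop; eauto using Z.divide_trans, Z.gcd_divide_l, Z.gcd_divide_r. }
  split; [|exact Hsplit].
  apply Z.divide_antisym_nonneg; [exact Hk | | |].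
  - apply Z.mul_nonneg_nonneg; apply Z.gcd_nonneg.
  - now apply divide_gcd_mul_gcd.
  - apply coprime_divisors_mul; [apply Z.gcd_divide_l | apply Z.gcd_divide_l | exact Hsplit].
Qed.

(* Under the same hypotheses, k | XY forces the square of the X-part of k
   to divide X, since that part is coprime to Y. *)
Lemma square_part_divides (k X Y : Z) :
  (k * k | X * Y) ->
  (forall d, (d | k) -> (d | X) -> (d | Y) -> (d | 1)) ->
  (Z.gcd k X * Z.gcd k X | X).
Proof.
  intros HXY Hcop.
  assert (HrY : Z.gcd (Z.gcd k X) Y = 1).
  { apply coprime_intro; intros d Hdr HdY.
    apply Hcop; eauto using Z.divide_trans, Z.gcd_divide_l, Z.gcd_divide_r. }
  apply Z.gauss with Y; [|now apply coprime_mul_l].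
  rewrite (Z.mul_comm Y); apply Z.divide_trans with (k * k); [|exact HXY].
  apply Z.divide_trans with (Z.gcd k X * k);
    [apply Z.mul_divide_mono_l | apply Z.mul_divide_mono_r]; apply Z.gcd_divide_l.
Qed.

Lemma norm_descent (D X Y u v r s : Z) :
  r <> 0 -> X = u * (r * r) -> Y = v * (r * r) ->
  is_solution D ((r * s) ^ 4) X Y -> u ^ 2 - D * v ^ 2 = s ^ 4.
Proof.
  unfold is_solution; intros Hr -> -> HN.
  apply Z.mul_reg_l with (r ^ 4); [now apply Z.pow_nonzero|].
  rewrite <- Z.pow_mul_l, <- HN; ring.
Qed.

Lemma primitive_of_coprime_norm (D N u v : Z) :
  is_solution D N u v -> Z.gcd u N = 1 -> Z.gcd u v = 1.
Proof.
  unfold is_solution; intros HN Hu; apply coprime_intro; intros d Hdu Hdv.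
  apply (coprime_elim _ _ _ Hu Hdu); rewrite <- HN.
  apply Z.divide_sub_r; apply Z.divide_mul_r; [exact Hdu | exact Hdv].
Qed.

(* Composition of (a,b) with (a',b'): the Brahmagupta product
   (a + b sqrt D)(a' - b' sqrt D) = comp_x + comp_y sqrt D. *)
Definition comp_x (D a b a' b' : Z) : Z := a * a' - D * b * b'.
Definition comp_y (a b a' b' : Z) : Z := a' * b - a * b'.

Lemma comp_is_solution (D n n' a b a' b' : Z) :
  is_solution D n a b -> is_solution D n' a' b' ->
  is_solution D (n * n') (comp_x D a b a' b') (comp_y a b a' b').
Proof. unfold is_solution, comp_x, comp_y; intros <- <-; ring. Qed.

Lemma equiv_of_comp_divisible (D n a b a' b' : Z) :
  (n | comp_x D a b a' b') -> (n | comp_y a b a' b') -> equiv_sol D n a b a' b'.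
Proof.
  intros Hx Hy; split; [exact Hx|].
  replace (a * b' - b * a') with (- comp_y a b a' b') by (unfold comp_y; ring).
  now apply Z.divide_opp_r.
Qed.

Lemma primitive_solution_opp (D n x y : Z) :
  primitive_solution D n x y -> primitive_solution D n x (- y).
Proof.
  unfold primitive_solution, is_solution; rewrite Z.gcd_opp_r.
  intros [HN Hg]; split; [rewrite <- HN; ring | exact Hg].
Qed.

(* For a primitive solution of X^2 - (k^2+1) Y^2 = k^2, the first
   coordinate is prime to k: a common factor would divide (k^2+1) b^2,
   hence b, since k^2+1 is prime to k. *)
Lemma coprime_k_first_coord (k a b : Z) :
  primitive_solution (k ^ 2 + 1) (k ^ 2) a b -> Z.gcd k a = 1.
Proof.
  unfold primitive_solution, is_solution; intros [HN Hab].
  apply coprime_intro; intros d Hdk Hda.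
  assert (HdD : Z.gcd d (k ^ 2 + 1) = 1).
  { apply coprime_intro; intros e Hed HeD.
    replace 1 with (k ^ 2 + 1 - k * k) by ring.
    apply Z.divide_sub_r; [exact HeD|].
    apply Z.divide_mul_l, (Z.divide_trans _ _ _ Hed Hdk). }
  assert (Hdb : (d | b * b)).
  { apply Z.gauss with (k ^ 2 + 1); [|exact HdD].
    replace ((k ^ 2 + 1) * (b * b)) with (a * a - k * k) by (rewrite Z.pow_2_r in HN |- *; lia).
    apply Z.divide_sub_r; apply Z.divide_mul_l; assumption. }
  exact (coprime_elim _ _ _ (coprime_mul_r _ _ _ Hab Hab) Hda Hdb).
Qed.

Lemma odd_coprime_2 (k : Z) : Z.odd k = true -> Z.gcd k 2 = 1.
Proof.
  rewrite Z.odd_spec; intros [m Hm]; apply coprime_intro; intros d Hdk Hd2.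
  replace 1 with (k - 2 * m) by lia.
  apply Z.divide_sub_r; [exact Hdk | now apply Z.divide_mul_l].
Qed.

Section TwoCompositions.

Variables k a b a' b' : Z.
Hypothesis k_pos : 0 < k.
Hypothesis k_odd : Z.odd k = true.
Hypothesis sol : primitive_solution (k ^ 2 + 1) (k ^ 2) a b.
Hypothesis sol' : primitive_solution (k ^ 2 + 1) (k ^ 2) a' b'.

Local Notation D := (k ^ 2 + 1).
Local Notation X := (comp_x D a b a' b').
Local Notation Y := (comp_y a b a' b').
Local Notation X' := (comp_x D a b a' (- b')).

(* k, X and X' have no common factor, because X + X' = 2aa' is prime to k. *)
Lemma comp_no_common_factor (d : Z) : (d | k) -> (d | X) -> (d | X') -> (d | 1).
Proof.
  intros Hdk HdX HdX'.
  assert (Hk2aa : Z.gcd k (2 * a * a') = 1).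
  { apply coprime_mul_r; [apply coprime_mul_r|];
      eauto using odd_coprime_2, coprime_k_first_coord. }
  apply (coprime_elim _ _ _ Hk2aa Hdk).
  replace (2 * a * a') with (X + X') by (unfold comp_x; ring).
  now apply Z.divide_add_r.
Qed.

Lemma comp_prod_divisible : (k * k | X * X').
Proof.
  destruct sol as [HN _], sol' as [HN' _]; unfold is_solution in HN, HN'.
  exists (k * k + D * (b * b + b' * b')).
  transitivity ((a * a) * (a' * a') - D * D * (b * b) * (b' * b'));
    [unfold comp_x; ring|].
  replace (a * a) with (k ^ 2 + D * b * b) by lia.
  replace (a' * a') with (k ^ 2 + D * b' * b') by lia.
  ring.
Qed.

Lemma comp_split : k = Z.gcd k X * Z.gcd k X' /\ Z.gcd (Z.gcd k X) (Z.gcd k X') = 1.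
Proof.
  apply coprime_factorization; [lia | | exact comp_no_common_factor].
  apply Z.divide_trans with (k * k); [apply Z.divide_factor_l | exact comp_prod_divisible].
Qed.

Lemma comp_descends :
  exists u v, X = u * (Z.gcd k X * Z.gcd k X) /\ Y = v * (Z.gcd k X * Z.gcd k X) /\
    Z.gcd u v = 1 /\ u ^ 2 - D * v ^ 2 = Z.gcd k X' ^ 4.
Proof.
  set (r := Z.gcd k X); set (s := Z.gcd k X').
  destruct comp_split as [Hkrs _]; fold r s in Hkrs.
  assert (HrX : (r * r | X)).
  { apply square_part_divides with X'; [exact comp_prod_divisible | exact comp_no_common_factor]. }
  assert (HrY : (r * r | Y)).
  { assert (Hra : Z.gcd (r * r) a = 1).
    { apply coprime_mul_l; apply coprime_divisor_l with k;
        [apply Z.gcd_divide_l | apply (coprime_k_first_coord _ _ _ sol)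
        |apply Z.gcd_divide_l | apply (coprime_k_first_coord _ _ _ sol)]. }
    apply Z.gauss with a; [|exact Hra].
    destruct sol as [HN _]; unfold is_solution in HN.
    replace (a * Y) with (b * X - b' * (a * a - D * b * b))
      by (unfold comp_x, comp_y; ring).
    rewrite HN; apply Z.divide_sub_r; apply Z.divide_mul_r; [exact HrX|].
    exists (s * s); rewrite Hkrs; ring. }
  destruct HrX as [u Hu], HrY as [v Hv].
  assert (Hnorm : u ^ 2 - D * v ^ 2 = s ^ 4).
  { apply norm_descent with X Y r; [intro Hr0; rewrite Hr0 in Hkrs; lia | exact Hu | exact Hv |].
    rewrite <- Hkrs; replace (k ^ 4) with (k ^ 2 * k ^ 2) by ring.
    destruct sol as [HN _], sol' as [HN' _].
    exact (comp_is_solution _ _ _ _ _ _ _ HN HN'). }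
  exists u, v; repeat split; [exact Hu | exact Hv | | exact Hnorm].
  apply primitive_of_coprime_norm with D (s ^ 4);
    [unfold is_solution; rewrite <- Hnorm; ring|].
  assert (Hus : Z.gcd u s = 1).
  { apply coprime_intro; intros d Hdu Hds.
    apply comp_no_common_factor;
      [apply Z.divide_trans with s; [exact Hds | apply Z.gcd_divide_l]
      |rewrite Hu; now apply Z.divide_mul_l
      |apply Z.divide_trans with s; [exact Hds | apply Z.gcd_divide_r]]. }
  replace (s ^ 4) with (s * (s * (s * s))) by ring.
  repeat apply coprime_mul_r; exact Hus.
Qed.

Lemma equiv_of_trivial_part : Z.gcd k X' = 1 -> equiv_sol D (k ^ 2) a b a' b'.
Proof.
  intros Hs1.
  destruct comp_split as [Hkrs _]; rewrite Hs1, Z.mul_1_r in Hkrs.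
  destruct comp_descends as [u [v [Hu [Hv _]]]]; rewrite <- Hkrs in Hu, Hv.
  apply equiv_of_comp_divisible; [exists u; rewrite Hu | exists v; rewrite Hv]; ring.
Qed.

End TwoCompositions.

Theorem lemma4p3 (k a b a' b' : Z) :
  0 < k -> Z.odd k = true ->
  primitive_solution (k ^ 2 + 1) (k ^ 2) a b ->
  primitive_solution (k ^ 2 + 1) (k ^ 2) a' b' ->
  ~ equiv_sol (k ^ 2 + 1) (k ^ 2) a b a' b' ->
  ~ equiv_sol (k ^ 2 + 1) (k ^ 2) a b a' (- b') ->
  exists p q : Z,
    1 < p /\ 1 < q /\ Z.gcd p q = 1 /\ k = p * q /\
    (exists u1 v1 : Z, Z.gcd u1 v1 = 1 /\ u1 ^ 2 - (k ^ 2 + 1) * v1 ^ 2 = p ^ 4) /\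
    (exists u2 v2 : Z, Z.gcd u2 v2 = 1 /\ u2 ^ 2 - (k ^ 2 + 1) * v2 ^ 2 = q ^ 4).
Proof.
  intros Hk Hodd Hsol Hsol' Hne Hne'.
  pose proof (primitive_solution_opp _ _ _ _ Hsol') as Hsol'opp.
  destruct (comp_split k a b a' b' Hk Hodd Hsol Hsol') as [Hkpq Hpq].
  destruct (comp_descends k a b a' b' Hk Hodd Hsol Hsol') as [u2 [v2 [_ [_ Hrep2]]]].
  destruct (comp_descends k a b a' (- b') Hk Hodd Hsol Hsol'opp) as [u1 [v1 [_ [_ Hrep1]]]].
  rewrite Z.opp_involutive in Hrep1.
  remember (Z.gcd k (comp_x (k ^ 2 + 1) a b a' b')) as p eqn:Hp.
  remember (Z.gcd k (comp_x (k ^ 2 + 1) a b a' (- b'))) as q eqn:Hq.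
  assert (Hq1 : q <> 1).
  { intro E; apply Hne, (equiv_of_trivial_part k a b a' b' Hk Hodd Hsol Hsol').
    now rewrite <- Hq. }
  assert (Hp1 : p <> 1).
  { intro E; apply Hne', (equiv_of_trivial_part k a b a' (- b') Hk Hodd Hsol Hsol'opp).
    now rewrite Z.opp_involutive, <- Hp. }
  assert (Hp0 : 0 <= p) by (rewrite Hp; apply Z.gcd_nonneg).
  assert (Hq0 : 0 <= q) by (rewrite Hq; apply Z.gcd_nonneg).
  assert (Hp_nz : p <> 0) by (intro E; rewrite E in Hkpq; lia).
  assert (Hq_nz : q <> 0) by (intro E; rewrite E, Z.mul_0_r in Hkpq; lia).
  exists p, q; repeat split; [lia | lia | exact Hpq | exact Hkpq | |].
  - exists u1, v1; exact Hrep1.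
  - exists u2, v2; exact Hrep2.
Qed.
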